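(* For every positive integer $k$, in any election there exists a $\frac{9.8217}{k}$-undominated committee of size $k$.
   Context: An election consists of a finite set $V$ of $n$ voters, a finite set $C$ of $m$ candidates, and for each voter $v$ a strict linear order $\succ_v$ on $C$. A committee is a subset $S \subseteq C$. For a candidate $a$ and committee $S$, write $a \succ_v S$ if $v$ prefers $a$ to every member of $S$, and let $\frac1n|a \succ S| = \frac1n|\{v \in V : a \succ_v S\}|$. A committee $S$ is $\alpha$-undominated if for every candidate $a \in C$, $\frac1n|a \succ S| < \alpha$. *)

From mathcomp Require Import all_boot all_order all_algebra.
Set Implicit Arguments. Unset Strict Implicit. Unset Printing Implicit Defensive.
Import GRing.Theory Num.Theory.
Local Open Scope ring_scope.

Definition strict_linear_order (C : finType) (r : rel C) : Prop :=
  irreflexive r /\ transitive r /\ (forall a b, a != b -> r a b || r b a).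

(* An election: voters V, candidates C, each voter v has a strict linear
   order [pref v] ; [pref v a b] means v strictly prefers a to b. *)
Definition election (V C : finType) (pref : V -> rel C) : Prop :=
  forall v, strict_linear_order (pref v).

Definition prefers_to_set (V C : finType) (pref : V -> rel C)
  (v : V) (a : C) (S : {set C}) : bool :=
  [forall b in S, pref v a b].

Definition dom_frac (V C : finType) (pref : V -> rel C) (a : C) (S : {set C}) : rat :=
  (#|[set v | prefers_to_set pref v a S]|)%:R / (#|V|)%:R.

Definition undominated (V C : finType) (pref : V -> rel C) (alpha : rat) (S : {set C}) : Prop :=
  forall a : C, dom_frac pref a S < alpha.

(* We prove a weighted strengthening: for nonnegative voter weights of total W
   there is a committee S of size k such that every candidate a is preferred to
   S by voters of total weight at most 9 W / k; unit weights give the theorem,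
   as 9 < 9.8217.  The proof is by induction on k, splitting k = K + k2 with
   K = ceil(k/2) and k2 = floor(k/2).

   For any distribution q on candidates, draw K+1 candidates independently from
   q: by symmetry each voter's favourite among them is the first one with
   probability at most 1/(K+1), so some committee of K candidates is beaten by a
   q-random challenger with weight at most W/(K+1).  Regret matching against
   these best responses produces 2 tau committees of size K that every fixed
   challenger beats with total weight at most (2 + 1/4) tau W/(K+1).

   For a voter v, the sets of candidates v ranks above these committees form a
   chain, so at most j committees have at most j sets of the chain containing
   theirs.  Discounting v by the fraction of tau not covered by this count
   leaves, for a suitable committee S1 of the sequence, total weight at most
   W/4, while the weight removed from a voter preferring a to S1 is paid for by
   the rounds in which a beats the committee.  The induction hypothesis for k2
   and the discounted weights gives S2, and S1 and S2 together satisfy the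
   bound because K and k2 differ by at most one. *)

From mathcomp Require Import all_boot all_order all_algebra perm.
From mathcomp Require Import zify ring lra.
Set Implicit Arguments. Unset Strict Implicit. Unset Printing Implicit Defensive.
Import Order.TTheory GRing.Theory Num.Theory.
Local Open Scope ring_scope.

Definition distribution (R : numDomainType) (I : finType) (p : I -> R) : Prop :=
  (forall i, 0 <= p i) /\ \sum_i p i = 1.

Lemma exists_le_of_avg_le (R : realDomainType) (I : finType) (p X : I -> R) (B : R) :
  distribution p -> \sum_i p i * X i <= B -> exists i, X i <= B.
Proof.
move=> [p_ge0 p_sum1] avg_le.
have [i0 _|no_i] := pickP (fun _ : I => true); last first.
  by move: p_sum1; rewrite big1 => [/eqP|i]; rewrite ?(eq_sym 0) ?oner_eq0 ?no_i.
case: (@arg_minP _ _ _ i0 predT X isT) => i _ X_min.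
exists i; apply: le_trans avg_le.
rewrite -[X i]mul1r -p_sum1 mulr_suml; apply: ler_sum => j _.
by rewrite ler_wpM2l ?X_min.
Qed.

Lemma exists_superset_card (T : finType) (S : {set T}) (k : nat) :
  (#|S| <= k <= #|T|)%N -> exists2 S' : {set T}, S \subset S' & #|S'| = k.
Proof.
case/andP=> Sk kT.
have /card_geqP[s [s_uniq s_size s_out]] : (k - #|S| <= #|~: S|)%N.
  by have := cardsC S; lia.
exists (S :|: [set x in s]); first exact: subsetUl.
have disj : S :&: [set x in s] = set0.
  apply/setP => x; rewrite !inE; apply/andP => -[xS /s_out].
  by rewrite inE xS.
rewrite cardsU disj cards0 subn0 cardsE (card_uniqP s_uniq) s_size; lia.
Qed.

Lemma subn_sum_leq (m n : nat) : (n - m = \sum_(j < n) (m <= j))%N.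
Proof.
elim: n => [|n IHn]; first by rewrite big_ord0.
by rewrite big_ord_recr /= -IHn; case: (leqP m n) => /=; lia.
Qed.

Lemma sum_nat_of_bool (I : finType) (P : pred I) :
  (\sum_i (P i : nat) = #|[set i | P i]|)%N.
Proof. by rewrite -sum1dep_card [RHS]big_mkcond; apply: eq_bigr => i _; case: (P i). Qed.

Section RankInTotalPreorder.
Variables (I : finType) (r : rel I).
Hypotheses (r_total : total r) (r_trans : transitive r).

Definition rank_of i := #|[set j | r i j]|.

Lemma card_rank_le j : (#|[set i | rank_of i <= j]| <= j)%N.
Proof.
set A := [set i | _].
have [i0 i0A|A0] := pickP (mem A); last by rewrite (eq_card0 A0).
case: (arg_maxnP rank_of i0A) => top topA top_max.
have A_above_top : A \subset [set j | r top j].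
  apply/subsetP => i iA; rewrite inE; apply/negPn/negP => not_r_top_i.
  have r_i_top : r i top by move: (r_total top i); rewrite (negbTE not_r_top_i).
  have : (rank_of top < rank_of i)%N.
    apply: proper_card; apply/properP; split.
      by apply/subsetP => l; rewrite !inE; apply: r_trans.
    by exists i; rewrite !inE // -[r i i]orbb r_total.
  by rewrite ltnNge => /negP; apply; exact: top_max.
apply: leq_trans (subset_leq_card A_above_top) _.
by have : top \in A := topA; rewrite inE.
Qed.

Lemma sum_subn_rank n : (2 * \sum_i (n - rank_of i) <= n * n)%N.
Proof.
under eq_bigr do rewrite subn_sum_leq.
rewrite exchange_big /=.
apply: leq_trans (_ : 2 * \sum_(j < n) j <= _)%N.
  rewrite leq_mul2l; apply/orP; right; apply: leq_sum => j _.
  by rewrite sum_nat_of_bool card_rank_le.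
rewrite -(big_mkord xpredT (fun j => j)) bin2_sum bin2.
have := odd_double_half (n * n.-1); nia.
Qed.
End RankInTotalPreorder.

Section Domination.
Variables (V C : finType) (pref : V -> rel C).

Definition above v (S : {set C}) : {set C} := [set a | prefers_to_set pref v a S].

Lemma prefers_to_setS v a (S S' : {set C}) :
  S \subset S' -> prefers_to_set pref v a S' -> prefers_to_set pref v a S.
Proof.
move=> sub_SS' /forallP a_S'; apply/forallP => b; apply/implyP => bS.
by have := a_S' b; rewrite (subsetP sub_SS' b bS).
Qed.

Lemma above_total v :
  strict_linear_order (pref v) -> total (fun S S' => above v S \subset above v S').
Proof.
case=> irr [tr tot] S S'; apply/negPn/negP.
rewrite negb_or => /andP[/subsetPn[a aS aS'] /subsetPn[b bS' bS]].
move: aS aS' bS' bS; rewrite !inE => aS aS' bS' bS.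
have ab : a != b by apply: contraNneq bS => <-.
case/orP: (tot a b ab) => [ab_v|ba_v].
- move/negP: aS'; apply; apply/forallP => c; apply/implyP => cS'.
  by apply: tr ab_v _; move/forallP/(_ c): bS'; rewrite cS'.
- move/negP: bS; apply; apply/forallP => c; apply/implyP => cS.
  by apply: tr ba_v _; move/forallP/(_ c): aS; rewrite cS.
Qed.

Variable R : numDomainType.
Implicit Types w : V -> R.

Definition dom_weight w a S := \sum_v w v * (prefers_to_set pref v a S)%:R.

Section NonnegWeights.
Variable w : V -> R.
Hypothesis w_ge0 : forall v, 0 <= w v.

Lemma dom_weight_ge0 a S : 0 <= dom_weight w a S.
Proof. by apply: sumr_ge0 => v _; rewrite mulr_ge0. Qed.

Lemma dom_weight_le_sum a S : dom_weight w a S <= \sum_v w v.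
Proof. by apply: ler_sum => v _; case: prefers_to_set; rewrite ?mulr1 ?mulr0. Qed.

Lemma dom_weightS a (S S' : {set C}) :
  S \subset S' -> dom_weight w a S' <= dom_weight w a S.
Proof.
move=> sub_SS'; apply: ler_sum => v _; apply: ler_wpM2l => //.
by case E: prefers_to_set => //=; rewrite (prefers_to_setS sub_SS' E).
Qed.

End NonnegWeights.
End Domination.

Section BestResponse.
Variables (R : realFieldType) (V C : finType) (pref : V -> rel C).
Hypothesis pref_order : election pref.
Variables (w : V -> R) (q : C -> R) (K : nat).
Hypotheses (w_ge0 : forall v, 0 <= w v) (q_distr : distribution q).

Local Notation tuple := {ffun 'I_K.+1 -> C}.
Implicit Types f : tuple.

Definition tuple_prob f := \prod_i q (f i).

Definition is_top v f i := [forall j, (j != i) ==> pref v (f i) (f j)].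

Definition tail_set f : {set C} := [set f j | j in [set~ ord0]].

Definition set_head f c : tuple := [ffun j => if j == ord0 then c else f j].

Lemma tuple_prob_distribution : distribution tuple_prob.
Proof.
have [q_ge0 q_sum1] := q_distr.
split=> [f|]; first by apply: prodr_ge0 => i _.
rewrite /tuple_prob -(bigA_distr_bigA (fun (_ : 'I_K.+1) c => q c)) /=.
by rewrite prodr_const q_sum1 expr1n.
Qed.

Lemma is_top_inj v f i j : is_top v f i -> is_top v f j -> i = j.
Proof.
have [irr [tr _]] := pref_order v.
move=> /forallP top_i /forallP top_j; apply/eqP; apply/negPn/negP => ij.
have := top_i j; rewrite eq_sym ij => /= fij.
have := top_j i; rewrite ij => /= fji.
by have := tr _ _ _ fij fji; rewrite irr.
Qed.

Lemma sum_is_top_le1 v f : \sum_i (is_top v f i)%:R <= 1 :> R.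
Proof.
have [i top_i|no_top] := pickP (is_top v f); last first.
  by rewrite big1 // => i _; rewrite no_top.
rewrite (bigD1 i) //= top_i big1 ?addr0 // => j ji.
by case top_j: (is_top v f j); rewrite // (is_top_inj top_j top_i) eqxx in ji.
Qed.

Lemma is_top_perm v f (s : {perm 'I_K.+1}) i :
  is_top v [ffun j => f (s j)] i = is_top v f (s i).
Proof.
apply/forallP/forallP => top j.
  by have := top ((s^-1)%g j); rewrite !ffunE permKV (can2_eq (permKV s) (permK s)).
by have := top (s j); rewrite !ffunE (inj_eq perm_inj).
Qed.

Lemma sum_tuple_prob_perm (s : {perm 'I_K.+1}) (F : tuple -> R) :
  \sum_f tuple_prob f * F f = \sum_f tuple_prob f * F [ffun j => f (s j)].
Proof.
have perm_tuple_inj : injective (fun f : tuple => [ffun j => f (s j)]).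
  move=> f g /ffunP fg; apply/ffunP => j.
  by have := fg ((s^-1)%g j); rewrite !ffunE permKV.
rewrite (reindex_inj perm_tuple_inj) /=; apply: eq_bigr => f _; congr (_ * _).
rewrite /tuple_prob [RHS](reindex_inj (@perm_inj _ s)).
by apply: eq_bigr => j _; rewrite ffunE.
Qed.

Lemma prob_is_top_head v : \sum_f tuple_prob f * (is_top v f ord0)%:R <= K.+1%:R^-1.
Proof.
have [tp_ge0 tp_sum1] := tuple_prob_distribution.
have top_any i : \sum_f tuple_prob f * (is_top v f ord0)%:R
               = \sum_f tuple_prob f * (is_top v f i)%:R.
  rewrite (sum_tuple_prob_perm (tperm ord0 i)).
  by under eq_bigr do rewrite is_top_perm tpermL.
rewrite -[_^-1]mul1r ler_pdivlMr ?ltr0Sn // mulrC.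
rewrite mulr_natl -[X in _ *+ X](card_ord K.+1) -sumr_const.
rewrite (eq_bigr _ (fun i _ => top_any i)) exchange_big /= -[X in _ <= X]tp_sum1.
apply: ler_sum => f _.
by rewrite -mulr_sumr ler_piMr ?sum_is_top_le1.
Qed.

Lemma is_top_head v f : is_top v f ord0 = prefers_to_set pref v (f ord0) (tail_set f).
Proof.
apply/forallP/forallP => top x.
  by apply/implyP => /imsetP[j]; rewrite !inE => j0 ->; have := top j; rewrite j0.
apply/implyP => x0; have := top (f x); rewrite (_ : f x \in tail_set f) //.
by apply/imsetP; exists x; rewrite // !inE.
Qed.

Lemma tail_set_head f c : tail_set (set_head f c) = tail_set f.
Proof. by apply: eq_in_imset => j; rewrite !inE => /negbTE j0; rewrite ffunE j0. Qed.

Lemma tuple_prob_set_head f c :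
  tuple_prob f * q c = tuple_prob (set_head f c) * q (f ord0).
Proof.
rewrite /tuple_prob (bigD1 ord0) //= [in RHS](bigD1 ord0) //= ffunE eqxx.
rewrite [in RHS](eq_bigr (fun j => q (f j))) => [|j /negbTE j0]; last by rewrite ffunE j0.
by rewrite mulrAC [RHS]mulrAC [q c * _]mulrC.
Qed.

Lemma sum_tuple_prob_head (G : {set C} -> C -> R) :
  \sum_f tuple_prob f * G (tail_set f) (f ord0)
  = \sum_f tuple_prob f * \sum_a q a * G (tail_set f) a.
Proof.
have [_ q_sum1] := q_distr.
under [RHS]eq_bigr do rewrite mulr_sumr.
rewrite pair_bigA /=.
pose swap_head (p : tuple * C) := (set_head p.1 p.2, p.1 ord0).
have swap_headK : involutive swap_head.
  case=> f c; rewrite /swap_head /= ffunE eqxx; congr (_, _).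
  by apply/ffunP => j; rewrite !ffunE; case: eqP => // ->.
rewrite (reindex_inj (inv_inj swap_headK)) /=.
transitivity (\sum_f \sum_a tuple_prob f * G (tail_set f) (f ord0) * q a).
  by apply: eq_bigr => f _; rewrite -mulr_sumr q_sum1 mulr1.
rewrite pair_bigA /=; apply: eq_bigr => -[f c] _ /=.
by rewrite tail_set_head mulrA -tuple_prob_set_head [RHS]mulrAC.
Qed.

Lemma committee_best_response : (K <= #|C|)%N ->
  exists2 S : {set C}, #|S| = K &
    \sum_a q a * dom_weight pref w a S <= (\sum_v w v) / K.+1%:R.
Proof.
move=> KC.
have avg : \sum_f tuple_prob f * \sum_a q a * dom_weight pref w a (tail_set f)
           <= (\sum_v w v) / K.+1%:R.
  rewrite -(sum_tuple_prob_head (fun S a => dom_weight pref w a S)) /dom_weight.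
  under eq_bigr do rewrite mulr_sumr.
  rewrite exchange_big /= mulr_suml; apply: ler_sum => v _.
  under eq_bigr do rewrite -is_top_head mulrCA.
  by rewrite -mulr_sumr ler_wpM2l ?prob_is_top_head.
have [f f_le] := exists_le_of_avg_le tuple_prob_distribution avg.
have [|S tail_S SK] := @exists_superset_card _ (tail_set f) K.
  rewrite KC andbT; apply: leq_trans (leq_imset_card _ _) _.
  by rewrite cardsC1 card_ord.
exists S => //; apply: le_trans f_le; apply: ler_sum => a _.
have [q_ge0 _] := q_distr.
by apply: ler_wpM2l; [exact: q_ge0 | exact: dom_weightS].
Qed.

End BestResponse.

Section RegretMatching.
Variables (R : realFieldType) (A : finType) (X : Type).
Variables (loss : X -> A -> R) (W B : R) (respond : (A -> R) -> X).
Hypotheses (loss_ge0 : forall x a, 0 <= loss x a) (loss_leW : forall x a, loss x a <= W).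
Hypothesis respond_le :
  forall q, distribution q -> \sum_a q a * loss (respond q) a <= B.
Hypothesis A_gt0 : (0 < #|A|)%N.
Implicit Types r : A -> R.

Local Notation pos x := (Num.max x 0).

Definition regret_distr r : A -> R :=
  let s := \sum_a pos (r a) in
  if 0 < s then fun a => pos (r a) / s else fun _ => #|A|%:R^-1.

Definition regret_play r := respond (regret_distr r).

Definition regret_value r := \sum_a regret_distr r a * loss (regret_play r) a.

Definition regret_step r a := r a + (loss (regret_play r) a - regret_value r).

Definition cum_regret t := iter t regret_step (fun _ => 0).

Definition regret_potential r := \sum_a pos (r a) ^+ 2.

Lemma regret_distribution r : distribution (regret_distr r).
Proof.
rewrite /regret_distr; case: ifP => [s_gt0|_]; split=> [a|].
- by rewrite divr_ge0 ?le_max ?lexx ?orbT // ltW.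
- by rewrite -mulr_suml divff // gt_eqF.
- by rewrite invr_ge0.
by rewrite sumr_const -(mulr_natr #|A|%:R^-1) mulVf // pnatr_eq0 -lt0n.
Qed.

Lemma regret_value_le r : regret_value r <= B.
Proof. exact/respond_le/regret_distribution. Qed.

Lemma regret_value_ge0 r : 0 <= regret_value r.
Proof.
have [q_ge0 _] := regret_distribution r.
by apply: sumr_ge0 => a _; rewrite mulr_ge0.
Qed.

Lemma regret_value_leW r : regret_value r <= W.
Proof.
have [q_ge0 q_sum1] := regret_distribution r.
rewrite -[W]mul1r -q_sum1 mulr_suml; apply: ler_sum => a _.
exact: ler_wpM2l.
Qed.

(* [regret_value r] averages the losses against the normalised positive part
   of [r], so each increment is orthogonal to that positive part. *)
Lemma sum_pos_regret_increment r :
  \sum_a pos (r a) * (loss (regret_play r) a - regret_value r) = 0.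
Proof.
under eq_bigr do rewrite mulrBr.
rewrite sumrB -mulr_suml /regret_value /regret_distr /regret_play.
case: ifP => [s_gt0|s_le0].
  under [X in _ - _ * X]eq_bigr do rewrite mulrAC.
  by rewrite -mulr_suml mulrCA divff ?gt_eqF // mulr1 subrr.
have s0 : \sum_a pos (r a) = 0.
  apply/eqP; rewrite eq_le sumr_ge0 ?andbT => [|a _]; last by rewrite le_max lexx orbT.
  by rewrite leNgt s_le0.
rewrite s0 mul0r subr0; apply: big1 => a _.
have pos_ge0 b : true -> 0 <= pos (r b) by rewrite le_max lexx orbT.
by rewrite (psumr_eq0P pos_ge0 s0) ?mul0r.
Qed.

Lemma pos_addr_sqr (x y : R) : pos (x + y) ^+ 2 <= (pos x + y) ^+ 2.
Proof. by rewrite !maxEle; case: ifP; case: ifP => /=; nra. Qed.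

Lemma regret_potential_step r :
  regret_potential (regret_step r) <= regret_potential r + #|A|%:R * W ^+ 2.
Proof.
set x := regret_play r; set v := regret_value r.
apply: le_trans (_ : \sum_a (pos (r a) + (loss x a - v)) ^+ 2 <= _).
  by apply: ler_sum => a _; apply: pos_addr_sqr.
have expand (p d : R) : (p + d) ^+ 2 = p ^+ 2 + 2 * (p * d) + d ^+ 2 by ring.
under eq_bigr do rewrite expand.
rewrite !big_split /= -mulr_sumr sum_pos_regret_increment mulr0 addr0 lerD2l.
rewrite mulr_natl -sumr_const; apply: ler_sum => a _.
have := loss_ge0 x a; have := loss_leW x a.
have := regret_value_ge0 r; have := regret_value_leW r.
rewrite -/v; nra.
Qed.

Lemma regret_potential_cum t :
  regret_potential (cum_regret t) <= t%:R * (#|A|%:R * W ^+ 2).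
Proof.
elim: t => [|t IHt].
  by rewrite mul0r /regret_potential big1 // => a _; rewrite maxxx expr0n.
apply: le_trans (regret_potential_step _) _.
by rewrite -natr1 mulrDl mul1r lerD2r.
Qed.

Lemma cum_regretE t a : cum_regret t a
  = \sum_(s < t) (loss (regret_play (cum_regret s)) a - regret_value (cum_regret s)).
Proof. by elim: t => [|t IHt]; rewrite ?big_ord0 // big_ord_recr -IHt. Qed.

Theorem regret_matching_le T a e : 0 <= e -> T%:R * (#|A|%:R * W ^+ 2) <= e ^+ 2 ->
  \sum_(t < T) loss (regret_play (cum_regret t)) a <= T%:R * B + e.
Proof.
move=> e_ge0 le_e2; set c := cum_regret T a.
have pos_c_le : pos c <= e.
  rewrite -ler_sqr ?nnegrE ?le_max ?lexx ?orbT //.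
  apply: le_trans (le_trans (regret_potential_cum T) le_e2).
  rewrite /regret_potential (bigD1 a) //= lerDl.
  by apply: sumr_ge0 => b _; apply: sqr_ge0.
have value_sum_le : \sum_(t < T) regret_value (cum_regret t) <= T%:R * B.
  rewrite -[T in T%:R]card_ord mulr_natl -sumr_const.
  by apply: ler_sum => t _; apply: regret_value_le.
have -> : \sum_(t < T) loss (regret_play (cum_regret t)) a
          = c + \sum_(t < T) regret_value (cum_regret t).
  by rewrite /c cum_regretE -big_split /=; apply: eq_bigr => t _; rewrite subrK.
have c_le : c <= pos c by rewrite le_max lexx.
lra.
Qed.

End RegretMatching.

Section RankDiscount.
Variables (R : realFieldType) (V C : finType) (pref : V -> rel C).
Hypothesis pref_order : election pref.
Variables (tau : nat) (Ss : 'I_(2 * tau) -> {set C}).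
Hypothesis tau_gt0 : (0 < tau)%N.

Definition seq_rank v :=
  rank_of (fun t t' => above pref v (Ss t) \subset above pref v (Ss t')).

Lemma sum_subn_seq_rank v : (2 * \sum_t (tau - seq_rank v t) <= tau * tau)%N.
Proof.
apply: sum_subn_rank => [t t'|t1 t2 t3]; first exact: above_total (pref_order v) (Ss t) (Ss t').
exact: subset_trans.
Qed.

Lemma seq_rank_le_count v a t : prefers_to_set pref v a (Ss t) ->
  (seq_rank v t <= #|[set t' | prefers_to_set pref v a (Ss t')]|)%N.
Proof.
move=> a_St; apply/subset_leq_card/subsetP => t'; rewrite !inE => /subsetP sub.
by have := sub a; rewrite !inE; apply.
Qed.

Variable w : V -> R.
Hypothesis w_ge0 : forall v, 0 <= w v.

Definition discounted_weight t0 v : R := w v * (tau - seq_rank v t0)%:R / tau%:R.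

Lemma discounted_weight_ge0 t0 v : 0 <= discounted_weight t0 v.
Proof. by rewrite divr_ge0 ?mulr_ge0. Qed.

Lemma exists_light_discount :
  exists t0, \sum_v discounted_weight t0 v <= (\sum_v w v) / 4.
Proof.
apply: (@exists_le_of_avg_le _ _ (fun _ => (2 * tau)%:R^-1)); first split.
- by move=> t; rewrite invr_ge0.
- rewrite sumr_const card_ord -(mulr_natr _^-1) mulVf //.
  by rewrite pnatr_eq0 muln_eq0 -lt0n tau_gt0.
rewrite -mulr_sumr exchange_big /=.
have sum_cut v : \sum_t discounted_weight t v <= w v * (tau%:R / 2).
  rewrite -mulr_suml -mulr_sumr -natr_sum -mulrA ler_wpM2l //.
  rewrite ler_pdivrMr ?ltr0n // mulrAC ler_pdivlMr // -!natrM ler_nat.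
  by have := sum_subn_seq_rank v; lia.
apply: le_trans (_ : (2 * tau)%:R^-1 * ((\sum_v w v) * (tau%:R / 2)) <= _).
  by apply: ler_wpM2l; rewrite ?invr_ge0 // mulr_suml ler_sum.
rewrite le_eqVlt; apply/orP; left; apply/eqP; rewrite natrM; field.
by rewrite pnatr_eq0 -lt0n tau_gt0.
Qed.

Lemma dom_weight_le_discount t0 (S' : {set C}) a : Ss t0 \subset S' ->
  dom_weight pref w a S'
  <= dom_weight pref (discounted_weight t0) a S'
     + (\sum_t dom_weight pref w a (Ss t)) / tau%:R.
Proof.
move=> sub_S'; rewrite /dom_weight exchange_big mulr_suml -big_split /=.
apply: ler_sum => v _; rewrite -mulr_sumr -natr_sum /discounted_weight -!mulrA -mulrDr.
apply: ler_wpM2l => //.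
case a_S': prefers_to_set; last by rewrite !mulr0 add0r divr_ge0.
have a_St0 := prefers_to_setS sub_S' a_S'.
rewrite sum_nat_of_bool !mulr1 -mulrDl ler_pdivlMr ?ltr0n // mul1r -natrD ler_nat.
by have := seq_rank_le_count a_St0; lia.
Qed.

End RankDiscount.

Lemma halves_bound_le (R : realFieldType) (K k2 : nat) (W y : R) :
  (0 < k2)%N -> (k2 <= K <= k2.+1)%N -> 0 <= W -> 0 <= y ->
  4 * k2%:R * y <= 9 * W -> (K + k2)%:R * (9 / 4 * (W / K.+1%:R) + y) <= 9 * W.
Proof.
move=> k2_gt0 /andP[k2K Kk2] W_ge0 y_ge0 y_le.
have key : ((K + k2) * (K.+1 + k2) <= 4 * K.+1 * k2)%N.
  suff [->|->] : K = k2 \/ K = k2.+1 by nia.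
  by lia.
move: key; rewrite -(ler_nat R) !natrM [(K.+1 + k2)%:R]natrD.
set s := (K + k2)%:R; set a := K.+1%:R; set b := k2%:R; set z := W / a => key.
have a_gt0 : 0 < a by rewrite ltr0Sn.
have b_ge1 : 1 <= b by rewrite ler1n.
have az : a * z = W by rewrite /z mulrC divfK ?gt_eqF.
have s_ge0 : 0 <= s by [].
have z_ge0 : 0 <= z by rewrite divr_ge0 // ltW.
rewrite -az in y_le *.
have h1 : 0 <= s * (9 * (a * z) - 4 * b * y) by rewrite mulr_ge0 // subr_ge0.
have h2 : 0 <= z * (4 * a * b - s * (a + b)) by rewrite mulr_ge0 // subr_ge0.
rewrite -(ler_pM2l (_ : 0 < 4 * b)); last by lra.
lra.
Qed.

Section Halving.
Variables (R : realFieldType) (V C : finType) (pref : V -> rel C).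
Hypothesis pref_order : election pref.

Section FixedWeights.
Variable w : V -> R.
Hypothesis w_ge0 : forall v, 0 <= w v.
Let W := \sum_v w v.

Lemma committee_sequence (K T : nat) (e : R) : (0 < K <= #|C|)%N ->
  0 <= e -> T%:R * (#|C|%:R * W ^+ 2) <= e ^+ 2 ->
  exists2 Ss : 'I_T -> {set C}, forall t, #|Ss t| = K &
    forall a, \sum_t dom_weight pref w a (Ss t) <= T%:R * (W / K.+1%:R) + e.
Proof.
case/andP=> K_gt0 KC e_ge0 e2.
pose B := W / K.+1%:R.
pose respond (q : C -> R) := odflt set0
  [pick S : {set C} | (#|S| == K) && (\sum_a q a * dom_weight pref w a S <= B)].
have respond_spec q : distribution q ->
    #|respond q| = K /\ \sum_a q a * dom_weight pref w a (respond q) <= B.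
  move=> q_distr; rewrite /respond; case: pickP => [S /andP[/eqP-> ->] //|none].
  have [S SK S_le] := committee_best_response pref_order w_ge0 q_distr KC.
  by have := none S; rewrite SK eqxx S_le.
have C_gt0 : (0 < #|C|)%N by apply: leq_trans KC.
pose loss S a := dom_weight pref w a S.
exists (fun t => regret_play respond (cum_regret loss respond t)) => [t|a].
  by have [] := respond_spec _ (regret_distribution C_gt0 (cum_regret loss respond t)).
apply: (regret_matching_le (loss := loss) (W := W) (B := B) _ _ _ C_gt0) => //.
- by move=> S b; apply: dom_weight_ge0.
- by move=> S b; apply: dom_weight_le_sum.
by move=> q /respond_spec[].
Qed.

Lemma halving_step K : (0 < K <= #|C|)%N ->
  exists S1 : {set C}, exists w' : V -> R,
  [/\ #|S1| = K, forall v, 0 <= w' v, \sum_v w' v <= W / 4 &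
      forall (S : {set C}) a, S1 \subset S ->
        dom_weight pref w a S <= 9 / 4 * (W / K.+1%:R) + dom_weight pref w' a S].
Proof.
move=> KC.
have W_ge0 : 0 <= W by apply: sumr_ge0.
(* [tau] makes the regret term [e / tau] equal to [W / (4 (K+1))]. *)
pose tau := (32 * #|C| * K.+1 ^ 2)%N.
have tau_gt0 : (0 < tau)%N by rewrite /tau; case/andP: KC => K_gt0 KC; nia.
pose e := tau%:R * W / (4 * K.+1%:R).
have e_ge0 : 0 <= e by rewrite divr_ge0 ?mulr_ge0.
have e2 : (2 * tau)%:R * (#|C|%:R * W ^+ 2) <= e ^+ 2.
  rewrite le_eqVlt; apply/orP; left; apply/eqP.
  rewrite /e /tau !natrM; field.
  by rewrite addrC natr1 pnatr_eq0.
have [Ss Ss_card Ss_sum] := committee_sequence KC e_ge0 e2.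
have [t0 light] := exists_light_discount pref_order Ss tau_gt0 w_ge0.
exists (Ss t0), (discounted_weight pref Ss w t0); split=> // [v|S a sub_S].
  exact: discounted_weight_ge0.
apply: le_trans (dom_weight_le_discount pref tau_gt0 w_ge0 a sub_S) _.
rewrite addrC lerD2r ler_pdivrMr ?ltr0n //; apply: le_trans (Ss_sum a) _.
rewrite le_eqVlt; apply/orP; left; apply/eqP.
rewrite /e natrM; field.
by rewrite addrC natr1 pnatr_eq0.
Qed.

End FixedWeights.

Lemma weighted_committee k : (0 < k <= #|C|)%N ->
  forall w : V -> R, (forall v, 0 <= w v) ->
  exists2 S : {set C}, #|S| = k &
    forall a, k%:R * dom_weight pref w a S <= 9 * \sum_v w v.
Proof.
elim/ltn_ind: k => k IHk /andP[k_gt0 kC] w w_ge0.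
have W_ge0 : 0 <= \sum_v w v by apply: sumr_ge0.
have [k_le1|k_gt1] := leqP k 1.
  have [|S _ S_card] := @exists_superset_card C set0 k; first by rewrite cards0.
  exists S => // a; have -> : k = 1%N by lia.
  by have := dom_weight_le_sum pref w_ge0 a S; rewrite mul1r; lra.
pose k2 := k./2; pose K := (k - k2)%N.
have k_split : k = (K + k2)%N by rewrite /K /k2; lia.
have KC : (0 < K <= #|C|)%N by rewrite /K /k2; lia.
have k2_lt : (k2 < k)%N by rewrite /k2; lia.
have k2C : (0 < k2 <= #|C|)%N by rewrite /k2; lia.
have [S1 [w' [S1_card w'_ge0 w'_light S1_bound]]] := halving_step w_ge0 KC.
have [S2 S2_card S2_bound] := IHk k2 k2_lt k2C w' w'_ge0.
have [|S sub_S S_card] := @exists_superset_card _ (S1 :|: S2) k.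
  by rewrite kC andbT cardsU S1_card S2_card; lia.
exists S => // a.
apply: le_trans (_ : (K + k2)%:R *
  (9 / 4 * ((\sum_v w v) / K.+1%:R) + dom_weight pref w' a S2) <= _).
  rewrite -k_split ler_wpM2l //.
  apply: le_trans (S1_bound S a (subset_trans (subsetUl _ _) sub_S)) _.
  by rewrite lerD2l dom_weightS // (subset_trans (subsetUr _ _) sub_S).
apply: halves_bound_le; rewrite ?dom_weight_ge0 //.
- by case/andP: k2C.
- by rewrite /K /k2; lia.
by have := S2_bound a; lra.
Qed.

End Halving.

Lemma ltr_ratio (R : numFieldType) (c n d : nat) : (0 < d)%N -> (c * d < n)%N ->
  c%:R < (n%:Z)%:~R / (d%:Z)%:~R :> R.
Proof. by move=> d_gt0 lt; rewrite !pmulrn ltr_pdivlMr ?ltr0n // -natrM ltr_nat. Qed.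

Lemma undominated_of_count_bound (V C : finType) (pref : V -> rel C) (S : {set C})
    (k : nat) (alpha : rat) :
  (0 < #|V|)%N -> (0 < k)%N -> 9 < alpha ->
  (forall a, k%:R * dom_weight pref (fun=> 1 : rat) a S <= 9 * \sum_(v : V) 1) ->
  undominated pref (alpha / k%:R) S.
Proof.
move=> V_gt0 k_gt0 alpha_gt9 S_bound a.
have count_le : k%:R * #|[set v | prefers_to_set pref v a S]|%:R <= 9 * #|V|%:R :> rat.
  have weight_card :
      dom_weight pref (fun=> 1 : rat) a S = #|[set v | prefers_to_set pref v a S]|%:R.
    rewrite /dom_weight -sum_nat_of_bool natr_sum.
    by apply: eq_bigr => v _; rewrite mul1r.
  by move: (S_bound a); rewrite weight_card sumr_const.
rewrite /dom_frac ltr_pdivrMr ?ltr0n // mulrAC ltr_pdivlMr ?ltr0n // mulrC.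
by apply: le_lt_trans count_le _; rewrite ltr_pM2r ?ltr0n.
Qed.

Theorem theorem2 (V C : finType) (pref : V -> rel C) (k : nat) :
  election pref -> (0 < #|V|)%N -> (0 < k)%N -> (k <= #|C|)%N ->
  exists S : {set C}, #|S| = k /\
    undominated pref (((98217%:Z)%:~R / (10000%:Z)%:~R) / k%:R) S.
Proof.
move=> pref_order V_gt0 k_gt0 kC.
have k_range : (0 < k <= #|C|)%N by rewrite k_gt0.
have [S S_card S_bound] :=
  @weighted_committee rat V C pref pref_order k k_range (fun=> 1) (fun=> ler01).
exists S; split; first exact: S_card.
apply: (undominated_of_count_bound V_gt0 k_gt0 _ S_bound).
exact: (@ltr_ratio rat 9 98217 10000 erefl erefl).
Qed.
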